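(* Let $\mathcal{Q}=\langle\mathcal{A},\mathcal{R}^-,\mathcal{R}^+,\tau\rangle$ be a QBAF, $\sigma$ a gradual semantics, $\alpha\in\mathcal{A}$ and $r_i,r_j\in\mathcal{R}$ with $r_i\neq r_j$. Suppose there exists $\mathcal{S}'\subseteq\mathcal{R}\setminus\{r_i,r_j\}$ with $\sigma_{\mathcal{S}'\cup\{r_i\}}(\alpha)>\sigma_{\mathcal{S}'\cup\{r_j\}}(\alpha)$, and that for all $\mathcal{S}''\subseteq\mathcal{R}\setminus\{r_i,r_j\}$ with $\mathcal{S}''\neq\mathcal{S}'$ we have $\sigma_{\mathcal{S}''\cup\{r_i\}}(\alpha)\ge\sigma_{\mathcal{S}''\cup\{r_j\}}(\alpha)$. Then $\phi^\alpha_\sigma(r_i)>\phi^\alpha_\sigma(r_j)$.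
   Context: A QBAF is a quadruple $\mathcal{Q}=\langle\mathcal{A},\mathcal{R}^-,\mathcal{R}^+,\tau\rangle$ with $\mathcal{A}$ a finite set of arguments, $\mathcal{R}^-,\mathcal{R}^+\subseteq\mathcal{A}\times\mathcal{A}$ disjoint attack and support relations, and $\tau:\mathcal{A}\to[0,1]$ base scores; $\mathcal{R}=\mathcal{R}^-\cup\mathcal{R}^+$. A gradual semantics $\sigma$ assigns strengths in $[0,1]$ to arguments of QBAFs and is assumed well-defined on all QBAFs considered. For $\mathcal{S}\subseteq\mathcal{R}$, $\sigma_{\mathcal{S}}(\alpha)$ denotes the strength of $\alpha$ in $\langle\mathcal{A},\mathcal{R}^-\cap\mathcal{S},\mathcal{R}^+\cap\mathcal{S},\tau\rangle$. The RAE from $r$ to $\alpha$ under $\sigma$ is $$\phi^\alpha_\sigma(r)=\sum_{\mathcal{S}\subseteq\mathcal{R}\setminus\{r\}}\frac{(|\mathcal{R}|-|\mathcal{S}|-1)!\,|\mathcal{S}|!}{|\mathcal{R}|!}\big[\sigma_{\mathcal{S}\cup\{r\}}(\alpha)-\sigma_{\mathcal{S}}(\alpha)\big].$$ *)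

From mathcomp Require Import all_boot all_order all_algebra.
Set Implicit Arguments. Unset Strict Implicit. Unset Printing Implicit Defensive.
Import Order.TTheory GRing.Theory Num.Theory.
Local Open Scope ring_scope.

Record QBAF (A : finType) (R : realFieldType) := MkQBAF {
  att : {set A * A};
  sup : {set A * A};
  tau : A -> R }.

Definition qbaf_wf (A : finType) (R : realFieldType) (Q : QBAF A R) : Prop :=
  [disjoint att Q & sup Q] /\ (forall a, 0 <= tau Q a <= 1).

Definition rels (A : finType) (R : realFieldType) (Q : QBAF A R) : {set A * A} :=
  att Q :|: sup Q.

Definition restrict (A : finType) (R : realFieldType) (Q : QBAF A R)
    (S : {set A * A}) : QBAF A R :=
  MkQBAF (att Q :&: S) (sup Q :&: S) (tau Q).

Definition semantics (A : finType) (R : realFieldType) := QBAF A R -> A -> R.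

Definition gradual (A : finType) (R : realFieldType) (sigma : semantics A R) : Prop :=
  forall Q, qbaf_wf Q -> forall a, 0 <= sigma Q a <= 1.

Definition strengthS (A : finType) (R : realFieldType) (sigma : semantics A R)
    (Q : QBAF A R) (S : {set A * A}) (alpha : A) : R :=
  sigma (restrict Q S) alpha.

Definition RAE (A : finType) (R : realFieldType) (sigma : semantics A R)
    (Q : QBAF A R) (alpha : A) (r : A * A) : R :=
  \sum_(S in powerset (rels Q :\ r))
     (((#|rels Q| - #|S| - 1)`! * #|S|`!)%:R / (#|rels Q|`!)%:R) *
     (strengthS sigma Q (r |: S) alpha - strengthS sigma Q S alpha).

From mathcomp Require Import all_boot all_order all_algebra ring.
Import Order.TTheory GRing.Theory Num.Theory.
Set Implicit Arguments.
Unset Strict Implicit.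
Unset Printing Implicit Defensive.
Local Open Scope ring_scope.

(* The RAE is the Shapley value of the coalitional game [S |-> sigma_S(alpha)]
   whose players are the relations.  Pairing each coalition avoiding both [ri]
   and [rj] with its extensions by the other relation, the difference of the two
   Shapley values becomes a sum, with positive weights, of the differences
   [sigma_{T + ri}(alpha) - sigma_{T + rj}(alpha)]: all of them are nonnegative
   and one is positive. *)

Lemma sum_powersetD1 (T : finType) (V : nmodType) (D : {set T}) (x : T)
    (F : {set T} -> V) :
  x \in D ->
  \sum_(S in powerset D) F S = \sum_(S in powerset (D :\ x)) (F S + F (x |: S)).
Proof.
move=> xD; rewrite big_split /= [LHS](bigID (fun S : {set T} => x \in S)) /= addrC.
congr (_ + _); first by apply: eq_bigl => S; rewrite !powersetE subsetD1.
rewrite (reindex_onto (fun S => x |: S) (fun S => S :\ x)) /=; last first.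
  by move=> S /andP[_ xS]; rewrite setD1K.
apply: eq_bigl => S; rewrite !powersetE subsetD1 setU11 andbT subUset sub1set xD /=.
case xS: (x \in S); last by rewrite setU1K ?xS ?eqxx ?andbT.
rewrite andbF; apply/negbTE/nandP; right; apply/eqP => eq_S.
by move: xS; rewrite -eq_S !inE eqxx.
Qed.

Section Shapley.

Variables (T : finType) (R : numFieldType).

Definition shapley_weight (n k : nat) : R := ((n - k - 1)`! * k`!)%:R / (n`!)%:R.

Definition shapley (D : {set T}) (v : {set T} -> R) (x : T) : R :=
  \sum_(S in powerset (D :\ x)) shapley_weight #|D| #|S| * (v (x |: S) - v S).

Lemma shapley_weight_gt0 n k : 0 < shapley_weight n k.
Proof. by apply: divr_gt0; rewrite ltr0n ?muln_gt0 !fact_gt0. Qed.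

Lemma shapleyB (D : {set T}) (v : {set T} -> R) (x y : T) :
  x \in D -> y \in D -> x != y ->
  shapley D v x - shapley D v y =
  \sum_(S in powerset (D :\: [set x; y]))
     (shapley_weight #|D| #|S| + shapley_weight #|D| #|S|.+1) *
     (v (x |: S) - v (y |: S)).
Proof.
move=> xD yD neq_xy.
have yDx : y \in D :\ x by rewrite in_setD1 yD andbT eq_sym.
have xDy : x \in D :\ y by rewrite in_setD1 xD andbT.
rewrite /shapley (sum_powersetD1 _ yDx) (sum_powersetD1 _ xDy) !setDDl (setUC [set y]) -sumrB.
apply: eq_bigr => S; rewrite powersetE => /subsetP SD.
have xS : x \notin S by apply/negP => /SD; rewrite !inE eqxx.
have yS : y \notin S by apply/negP => /SD; rewrite !inE eqxx orbT.
by rewrite !cardsU1 xS yS setUCA add1n; ring.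
Qed.

Lemma shapley_lt (D : {set T}) (v : {set T} -> R) (x y : T) :
  x \in D -> y \in D -> x != y ->
  (forall S : {set T}, S \subset D :\: [set x; y] -> v (y |: S) <= v (x |: S)) ->
  (exists2 S : {set T}, S \subset D :\: [set x; y] & v (y |: S) < v (x |: S)) ->
  shapley D v y < shapley D v x.
Proof.
move=> xD yD neq_xy le_yx [S0 S0D lt_yx].
rewrite -subr_gt0 shapleyB // (bigD1 S0) ?powersetE //=.
apply: ltr_wpDr.
  apply: sumr_ge0 => S /andP[]; rewrite powersetE => SD _.
  by apply: mulr_ge0; rewrite ?subr_ge0 ?le_yx // ltW ?addr_gt0 ?shapley_weight_gt0.
by apply: mulr_gt0; rewrite ?subr_gt0 // addr_gt0 ?shapley_weight_gt0.
Qed.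

End Shapley.

Lemma RAE_shapley (A : finType) (R : realFieldType) (sigma : semantics A R)
    (Q : QBAF A R) (alpha : A) (r : A * A) :
  RAE sigma Q alpha r = shapley (rels Q) (strengthS sigma Q ^~ alpha) r.
Proof. by []. Qed.

Theorem proposition5 (A : finType) (R : realFieldType) (Q : QBAF A R)
    (sigma : semantics A R) (alpha : A) (ri rj : A * A) :
  qbaf_wf Q -> gradual sigma ->
  ri \in rels Q -> rj \in rels Q -> ri != rj ->
  (exists S' : {set A * A},
      S' \subset rels Q :\: [set ri; rj] /\
      strengthS sigma Q (ri |: S') alpha > strengthS sigma Q (rj |: S') alpha /\
      (forall S'' : {set A * A}, S'' \subset rels Q :\: [set ri; rj] -> S'' != S' ->
         strengthS sigma Q (ri |: S'') alpha >= strengthS sigma Q (rj |: S'') alpha)) ->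
  RAE sigma Q alpha ri > RAE sigma Q alpha rj.
Proof.
move=> _ _ riR rjR neq_ij [S' [S'D [lt_S' ge_S]]].
rewrite !RAE_shapley; apply: shapley_lt => //; last by exists S'.
move=> S SD; have [-> | neq_S] := eqVneq S S'; first exact: ltW.
exact: ge_S.
Qed.
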